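(* Let $\mathcal{X}$ and $\mathcal{A}=\mathcal{B}$ be finite sets and let $P_{XAB}$ be a probability distribution on $\mathcal{X}\times\mathcal{A}\times\mathcal{B}$ such that (i) the marginal $P_X$ is uniform on $\mathcal{X}$; (ii) $P_{AB|X}=P_{A|X}P_{B|X}$, i.e. $P_{XAB}(x,a,b)=P_X(x)P_{A|X}(a|x)P_{B|X}(b|x)$; (iii) $P_{A|X}=P_{B|X}$. For functions $f\colon\mathcal{A}\to\mathcal{X}$, $g\colon\mathcal{B}\to\mathcal{X}$ let $$W(f,g)=\sum_{x\in\mathcal{X},a\in\mathcal{A},b\in\mathcal{B}}P_{XAB}(x,a,b)\,\delta[f(a)=g(b)=x].$$ Then there exists a function $f\colon\mathcal{A}\to\mathcal{X}$ such that $W(f,f)=\max_{f',g'}W(f',g')$, where the maximum ranges over all pairs of functions $f'\colon\mathcal{A}\to\mathcal{X}$, $g'\colon\mathcal{B}\to\mathcal{X}$. In other words, the classical LSSD game defined by $P_{XAB}$ has an optimal deterministic strategy that is symmetric.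
   Context: $\delta[\cdot]$ denotes the indicator function, equal to $1$ if its argument is true and $0$ otherwise. In the (two-player, classical) local simultaneous state discrimination (LSSD) game defined by $P_{XAB}$, a referee samples $(x,a,b)\sim P_{XAB}$ and gives $a$ to Alice and $b$ to Bob; without communicating, they output guesses of $x$ and win iff both guesses equal $x$. A deterministic strategy is a pair of functions $(f,g)$ with winning probability $W(f,g)$; it is symmetric if $f=g$. *)

From mathcomp Require Import all_boot all_order all_algebra.
Set Implicit Arguments. Unset Strict Implicit. Unset Printing Implicit Defensive.
Import Order.TTheory GRing.Theory Num.Theory.
Local Open Scope ring_scope.

Section LSSD.
Variables (R : realFieldType) (X A B : finType).
Variable P : X -> A -> B -> R.

Definition is_distr := (forall x a b, 0 <= P x a b) /\
  \sum_(x : X) \sum_(a : A) \sum_(b : B) P x a b = 1.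

Definition PX (x : X) : R := \sum_(a : A) \sum_(b : B) P x a b.
Definition PXA (x : X) (a : A) : R := \sum_(b : B) P x a b.
Definition PXB (x : X) (b : B) : R := \sum_(a : A) P x a b.
Definition PAgX (a : A) (x : X) : R := PXA x a / PX x.
Definition PBgX (b : B) (x : X) : R := PXB x b / PX x.

Definition W (f : A -> X) (g : B -> X) : R :=
  \sum_(x : X) \sum_(a : A) \sum_(b : B)
     P x a b * (((f a == x) && (g b == x)) : bool)%:R.
End LSSD.

From mathcomp Require Import all_boot all_order all_algebra.
From mathcomp Require Import ring lra.
Set Implicit Arguments. Unset Strict Implicit.
Import Order.TTheory GRing.Theory Num.Theory.
Local Open Scope ring_scope.

(* When A and B are conditionally independent given X with equal conditionals,
   W(f, g) = sum_x P_X(x) s_f(x) s_g(x), where s_f(x) is the probability that a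
   player using f guesses x when X = x.  Pointwise AM-GM gives
   2 W(f, g) <= W(f, f) + W(g, g), so a maximiser of the diagonal f |-> W(f, f),
   which exists since there are finitely many strategies, is optimal. *)

Lemma exists_fun_argmax d (T : orderType d) (aT rT : finType)
    (F : (aT -> rT) -> T) :
  (forall f g, f =1 g -> F f = F g) -> rT -> exists f, forall g, (F g <= F f)%O.
Proof.
move=> eq_F y0.
have [fm _ fm_max] :=
  @arg_maxP _ _ {ffun aT -> rT} [ffun=> y0] xpredT (fun f => F f) isT.
exists fm => g; have := fm_max [ffun a => g a] isT.
by rewrite (@eq_F [ffun a => g a] g) // => a; rewrite ffunE.
Qed.

Section SymmetricLSSD.
Variables (R : realFieldType) (X A : finType) (P : X -> A -> A -> R).

Lemma eq_W (f1 f2 g1 g2 : A -> X) :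
  f1 =1 f2 -> g1 =1 g2 -> W P f1 g1 = W P f2 g2.
Proof.
move=> ef eg; apply: eq_bigr => x _; apply: eq_bigr => a _.
by apply: eq_bigr => b _; rewrite ef eg.
Qed.

Lemma distr_nonempty : is_distr P -> X.
Proof.
move=> [_ sumP1]; case: (pickP (@predT X)) => [x0 _ | noX]; first exact: x0.
by move: sumP1; rewrite big_pred0 // => /eqP; rewrite eq_sym oner_eq0.
Qed.

Lemma PX_ge0 x : (forall x a b, 0 <= P x a b) -> 0 <= PX P x.
Proof. by move=> P_ge0; do 2 (apply: sumr_ge0 => ? _). Qed.

Definition success (f : A -> X) (x : X) : R :=
  \sum_(a : A) PAgX P a x * (f a == x)%:R.

Hypothesis P_factor : forall x a b, P x a b = PX P x * PAgX P a x * PBgX P b x.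
Hypothesis P_sym : forall x a, PAgX P a x = PBgX P a x.

Lemma W_success f g : W P f g = \sum_x PX P x * (success f x * success g x).
Proof.
apply: eq_bigr => x _; under eq_bigr do under eq_bigr do rewrite P_factor -P_sym.
(* PX P x is itself a sum, which big_distrl must not see. *)
move: (PX P x) => px; rewrite /success big_distrl mulr_sumr; apply: eq_bigr => a _ /=.
rewrite big_distrr mulr_sumr; apply: eq_bigr => b _ /=.
by rewrite -mulnb natrM; ring.
Qed.

Lemma W_le_diag :
  (forall x a b, 0 <= P x a b) ->
  forall f g, 2 * W P f g <= W P f f + W P g g.
Proof.
move=> P_ge0 f g; rewrite !W_success mulr_sumr -big_split /=.
apply: ler_sum => x _; rewrite -subr_ge0.
have -> : PX P x * (success f x * success f x) + PX P x * (success g x * success g x)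
    - 2 * (PX P x * (success f x * success g x))
    = PX P x * (success f x - success g x) ^+ 2 by ring.
by rewrite mulr_ge0 ?sqr_ge0 ?PX_ge0.
Qed.

End SymmetricLSSD.

Theorem mainTheorem1 (R : realFieldType) (X A : finType) (P : X -> A -> A -> R) :
  is_distr P ->
  (forall x : X, PX P x = #|X|%:R^-1) ->
  (forall x a b, P x a b = PX P x * PAgX P a x * PBgX P b x) ->
  (forall x a, PAgX P a x = PBgX P a x) ->
  exists f : A -> X, forall f' g' : A -> X, W P f' g' <= W P f f.
Proof.
move=> distrP _ P_factor P_sym.
have [fm fm_max] := exists_fun_argmax (F := fun f => W P f f)
  (fun f g efg => eq_W P efg efg) (distr_nonempty distrP).
exists fm => f' g'.
have := W_le_diag P_factor P_sym distrP.1 f' g'.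
have := fm_max f'; have := fm_max g'; lra.
Qed.
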